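(* For $n\ge1$, let $P_n$ be the number of pairs $(T,p)$ with $T$ a rooted tree on vertex set $[n]$ and $p$ a prime parking function on $T$, and let $\mathcal{SRP}_n$ be the set of standardized restricted prime parking functions on $n$ vertices. Then \[ P_n=n!\,|\mathcal{SRP}_n|. \]
   Context: A rooted tree on $[n]$ has its edges oriented towards the root; the edge $u\to v$ is written $(u,v)$. For $p\in[n]^n$, drivers $1,\dots,n$ arrive in order; driver $i$ parks at $p_i$ if unoccupied, otherwise follows the directed path towards the root and parks at the first unoccupied vertex, leaving if none exists. $(T,p)$ is a parking function if all drivers park. $T_v$ is the set of vertices with a directed path to $v$ (including $v$); $(T,p)$ is prime if $|T_v|<|\{i:p_i\in T_v\}|$ for every non-root $v$. An edge is crossed/used by a driver if she crosses it after failing to park at her preferred vertex. An ordered (plane) tree is a rooted tree in which the children of each vertex are linearly ordered (left to right). Post-order labeling of an ordered tree with $n$ vertices assigns labels $1,\dots,n$ so that each vertex is labeled after all vertices in the subtrees of its children, and the subtrees of children are labeled from left to right (i.e. the standard post-order traversal). A pair $(\mathcal T,p)$ with $\mathcal T$ an ordered tree with $|\mathcal T|=n$ and $p\in[n]^n$ is a standardized restricted prime parking function if: (1) $(\mathcal T,p)$ is a prime parking function when $\mathcal T$ is regarded as an unordered rooted tree; (2) for any two siblings $u,v$ with parent $w$, $v$ is ordered to the right of $u$ if and only if the edge $(v,w)$ is crossed by some driver before the edge $(u,w)$ is first crossed during the parking procedure; (3) $\mathcal T$ is labeled by post-order. $\mathcal{SRP}_n$ is the set of all such pairs. *)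

From mathcomp Require Import all_boot.
Set Implicit Arguments. Unset Strict Implicit. Unset Printing Implicit Defensive.

(* Vertex set [n] is encoded as 'I_n (vertex k+1 of the paper is ordinal k);
   drivers 1..n are encoded as ordinals 0..n-1 of 'I_n.
   A rooted tree is encoded by its parent map par : vertex -> vertex, the
   edge v -> par v being the edge (v, par v) oriented towards the root, and
   par r = r for the root r. *)

Section Parking.
Variable n : nat.
Notation V := 'I_n.

Definition is_rtree (par : {ffun V -> V}) : bool :=
  [exists r : V, [forall v : V, iter n par v == r]].

Definition subtree (par : {ffun V -> V}) (v : V) : {set V} :=
  [set u : V | [exists k : 'I_n.+1, iter k par u == v]].

(* Vertex at which a driver arriving at v parks, given the occupied set occ
   (None if she leaves the tree).  Fuel n suffices for a tree. *)
Fixpoint park_at (par : {ffun V -> V}) (occ : {set V}) (fuel : nat) (v : V)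
  : option V :=
  match fuel with
  | 0 => None
  | S f => if v \notin occ then Some v
           else if par v == v then None
           else park_at par occ f (par v)
  end.

(* Lower endpoints x of the edges (x, par x) crossed by a driver arriving
   at v (edges crossed after failing to park). *)
Fixpoint crossed (par : {ffun V -> V}) (occ : {set V}) (fuel : nat) (v : V)
  : seq V :=
  match fuel with
  | 0 => [::]
  | S f => if v \notin occ then [::]
           else if par v == v then [::]
           else v :: crossed par occ f (par v)
  end.

Definition park_step (par : {ffun V -> V}) (occ : {set V}) (a : V) : {set V} :=
  match park_at par occ n a with Some v => v |: occ | None => occ end.

Definition occ_before (par p : {ffun V -> V}) (i : V) : {set V} :=
  foldl (park_step par) set0 (map p (filter (fun j : V => j < i) (enum V))).

Definition is_parking (par p : {ffun V -> V}) : bool :=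
  [forall i : V, park_at par (occ_before par p i) n (p i) != None].

Definition is_prime (par p : {ffun V -> V}) : bool :=
  [forall v : V, (par v != v) ==>
     (#|subtree par v| < #|[set i : V | p i \in subtree par v]|)].

(* Driver index of the first driver crossing the edge (u, par u);
   equals n if the edge is never crossed. *)
Definition first_cross (par p : {ffun V -> V}) (u : V) : nat :=
  find (fun i : V => u \in crossed par (occ_before par p i) n (p i)) (enum V).

(* Ordered tree labelled by post-order.  Children are ordered left to right
   according to their labels (this is forced by post-order labelling):
   every vertex has a larger label than all vertices of its subtree, and
   for siblings u left of v (u < v) the whole subtree of u is labelled
   before the whole subtree of v.  A rooted tree par satisfying this
   corresponds to exactly one ordered tree with its post-order labelling. *)
Definition is_postorder (par : {ffun V -> V}) : bool :=
  [forall u : V, [forall v : V, (v \in subtree par u) ==> (v <= u)]] &&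
  [forall u : V, [forall v : V,
     [&& u < v, par u == par v, par u != u & par v != v] ==>
     [forall x : V, [forall y : V,
        [&& x \in subtree par u & y \in subtree par v] ==> (x < y)]]]].

(* Condition (2): for siblings u, v (distinct non-root vertices with the
   same parent), v is to the right of u iff (v,w) is crossed by some driver
   before (u,w) is first crossed. *)
Definition is_restricted (par p : {ffun V -> V}) : bool :=
  [forall u : V, [forall v : V,
     [&& u != v, par u == par v, par u != u & par v != v] ==>
     ((u < v) == (first_cross par p v < first_cross par p u))]].

Definition P_count : nat :=
  #|[set tp : {ffun V -> V} * {ffun V -> V} |
      [&& is_rtree tp.1, is_parking tp.1 tp.2 & is_prime tp.1 tp.2]]|.

Definition SRP : {set {ffun V -> V} * {ffun V -> V}} :=
  [set tp : {ffun V -> V} * {ffun V -> V} |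
      [&& is_rtree tp.1, is_postorder tp.1,
          is_parking tp.1 tp.2, is_prime tp.1 tp.2 &
          is_restricted tp.1 tp.2]].

End Parking.

(* S_n acts freely on pairs (T, p) by relabelling the vertices,
   preserving rootedness, parking, primality and the time at which each edge is
   first crossed, so it suffices that every orbit of prime parking pairs contains
   exactly one standardized pair.  In a prime parking function every non-root
   edge is crossed, and sibling edges are first crossed by different drivers,
   since a driver's route enters each vertex at most once.  Ordering siblings so
   that the edge crossed first is rightmost thus turns T into a plane tree, and
   conditions (2)-(3) say exactly that the labels are its post-order.  Two
   labellings that are post-orders for the same sibling order induce the same
   order on the vertices, so the post-order relabelling exists (rank the vertices
   by the sequences of first-crossing times along their root paths, compared
   lexicographically) and it is the only one. *)

From mathcomp Require Import all_boot all_order fingroup perm.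
Set Implicit Arguments. Unset Strict Implicit. Unset Printing Implicit Defensive.

Import Order.TTheory.

Lemma ltxi_catl d (T : porderType d) (s t1 t2 : seq T) :
  (s ++ t1 < s ++ t2 :> seqlexi T)%O = (t1 < t2 :> seqlexi T)%O.
Proof. by elim: s => //= x s IH; rewrite eqhead_ltxiE. Qed.

Lemma ltxi_prefix d (T : porderType d) (s t : seq T) x :
  (s < s ++ x :: t :> seqlexi T)%O.
Proof. by rewrite -[X in (X < _)%O]cats0 ltxi_catl. Qed.

Section RootedTree.
Variable n : nat.
Notation V := 'I_n.
Variable par : {ffun V -> V}.

Definition siblings (a b : V) : bool := [&& par a == par b, par a != a & par b != b].

Lemma siblings_sym a b : siblings a b = siblings b a.
Proof. by rewrite /siblings eq_sym [(par a != a) && _]andbC. Qed.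

Lemma iter_fixed (r : V) k : par r = r -> iter k par r = r.
Proof. by move=> pr; elim: k => //= k ->. Qed.

Definition root_path (v : V) : seq V := rev [seq x <- traject par v n | par x != x].

Hypothesis tree : is_rtree par.

Lemma rtree_root : exists2 r : V, par r = r & forall v, iter n par v = r.
Proof.
case/existsP: tree => r /forallP hr; exists r => [|v]; last exact/eqP.
by rewrite -{1}(eqP (hr r)) -iterS iterSr (eqP (hr _)).
Qed.

Lemma iter_ge_n (v : V) m : n <= m -> iter m par v = iter n par v.
Proof.
have [r pr hr] := rtree_root.
by move=> le_nm; rewrite -(subnK le_nm) iterD hr iter_fixed.
Qed.

Lemma periodic_fixed (w : V) k : iter k.+1 par w = w -> par w = w.
Proof.
have [r pr hr] := rtree_root => wk.
have wkn j : iter (j * k.+1) par w = w by elim: j => // j IH; rewrite mulSn iterD IH wk.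
by rewrite -(wkn n) iter_ge_n ?leq_pmulr // hr.
Qed.

Lemma subtreeP (u w : V) :
  reflect (exists k, iter k par u = w) (u \in subtree par w).
Proof.
rewrite inE; apply: (iffP existsP) => [[k /eqP <-]|[k uw]]; first by exists k.
have [le_kn|lt_nk] := leqP k n; first by exists (Ordinal (le_kn : k < n.+1)); rewrite uw.
by exists ord_max; rewrite /= -(iter_ge_n _ (ltnW lt_nk)) uw.
Qed.

Lemma subtree_refl (u : V) : u \in subtree par u.
Proof. by apply/subtreeP; exists 0. Qed.

Lemma subtree_par (u : V) : u \in subtree par (par u).
Proof. by apply/subtreeP; exists 1. Qed.

Lemma subtree_trans (x u w : V) :
  x \in subtree par u -> u \in subtree par w -> x \in subtree par w.
Proof.
move=> /subtreeP [k xu] /subtreeP [j uw].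
by apply/subtreeP; exists (j + k); rewrite iterD xu.
Qed.

Lemma par_in_subtree (u w : V) : u \in subtree par w -> u != w -> par u \in subtree par w.
Proof.
case/subtreeP=> [[|k] /= uw nuw]; first by rewrite uw eqxx in nuw.
by apply/subtreeP; exists k; rewrite -iterSr.
Qed.

Lemma subtree_root (r v : V) : par r = r -> v \in subtree par r.
Proof.
have [r' _ hr] := rtree_root => pr.
by apply/subtreeP; exists n; rewrite hr -(hr r) iter_fixed.
Qed.

Lemma subtree_child (x w : V) : x \in subtree par w -> x != w ->
  exists c, [/\ par c = w, par c != c & x \in subtree par c].
Proof.
case/subtreeP=> k; elim: k x => [x /= -> | k IH x]; first by rewrite eqxx.
rewrite iterSr => xk xw; have [pxw | pxw] := eqVneq (par x) w.
  by exists x; rewrite pxw eq_sym subtree_refl.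
have [c [pc nc pxc]] := IH _ xk pxw.
by exists c; split=> //; exact: subtree_trans (subtree_par x) pxc.
Qed.

Lemma subtree_cases (u v : V) :
  [\/ u \in subtree par v, v \in subtree par u |
      exists a b, [/\ siblings a b, a != b, u \in subtree par a & v \in subtree par b]].
Proof.
have [r pr hr] := rtree_root.
have [k ukr] : exists k, iter k par u = r by exists n.
elim: k u ukr => [u /= -> | k IH u]; first by apply: Or32; apply: subtree_root.
rewrite iterSr => /IH; have [pu _ | npu] := eqVneq (par u) u.
  by apply: Or32; apply: subtree_root.
case=> [puv | vpu | [a [b [sab nab pua vb]]]].
- by apply: Or31; exact: subtree_trans (subtree_par u) puv.
- have [-> | vpu'] := eqVneq v (par u); first by apply: Or31; apply: subtree_par.
  have [c [pc nc vc]] := subtree_child vpu vpu'.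
  have [-> | uc] := eqVneq u c; first exact: Or32.
  by apply: Or33; exists u, c; rewrite /siblings nc pc eqxx npu uc subtree_refl.
- by apply: Or33; exists a, b; split=> //; exact: subtree_trans (subtree_par u) pua.
Qed.

Lemma root_path_root (r : V) : par r = r -> root_path r = [::].
Proof.
move=> pr; rewrite /root_path (@eq_in_filter _ _ pred0) ?filter_pred0 //.
by move=> x /trajectP [i _ ->]; rewrite iter_fixed // pr eqxx.
Qed.

Lemma root_path_child (u : V) : par u != u ->
  root_path u = rcons (root_path (par u)) u.
Proof.
have [r pr hr] := rtree_root => npu.
have n_gt0 : 0 < n := leq_ltn_trans (leq0n u) (ltn_ord u).
have trajS v : traject par v n = v :: traject par (par v) n.-1.
  by rewrite -trajectS prednK.
have trajSr v : traject par v n = rcons (traject par v n.-1) (iter n.-1 par v).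
  by rewrite -trajectSr prednK.
rewrite /root_path trajS trajSr filter_rcons -iterSr (prednK n_gt0) hr pr eqxx /= npu.
exact: rev_cons.
Qed.

Lemma root_path_subtree (x u : V) : x \in subtree par u ->
  exists q, root_path x = root_path u ++ q.
Proof.
case/subtreeP=> k; elim: k x => [x /= -> | k IH x]; first by exists [::]; rewrite cats0.
rewrite iterSr => /IH [q pxq]; have [px | npx] := eqVneq (par x) x.
  by move: pxq; rewrite px => ->; exists q.
by exists (rcons q x); rewrite root_path_child // pxq rcons_cat.
Qed.

Lemma root_path_inj : injective root_path.
Proof.
have [r pr hr] := rtree_root.
have root_eq v : par v = v -> v = r by move=> pv; rewrite -(hr v) iter_fixed.
move=> u v; have [pu | npu] := eqVneq (par u) u; have [pv | npv] := eqVneq (par v) v.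
- by move=> _; rewrite (root_eq u pu) (root_eq v pv).
- by rewrite (root_path_root pu) (root_path_child npv) => /(congr1 size); rewrite size_rcons.
- by rewrite (root_path_root pv) (root_path_child npu) => /(congr1 size); rewrite size_rcons.
- by rewrite (root_path_child npu) (root_path_child npv) => /rcons_inj [].
Qed.

Section Postorder.
Variable sib_lt : rel V.

Definition postorder_wrt d (T : orderType d) (f : V -> T) : Prop :=
  (forall x u, x \in subtree par u -> x != u -> (f x < f u)%O) /\
  (forall a b x y, siblings a b -> sib_lt a b ->
     x \in subtree par a -> y \in subtree par b -> (f x < f y)%O).

Lemma postorder_wrt_mono d1 d2 (T1 : orderType d1) (T2 : orderType d2)
    (f : V -> T1) (g : V -> T2) :
  (forall u v, (f u < f v)%O = (g u < g v)%O) -> postorder_wrt f -> postorder_wrt g.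
Proof.
move=> fg [desc sib]; split=> [x u xu nxu | a b x y sab lab xa yb]; rewrite -fg.
  exact: desc.
exact: sib lab xa yb.
Qed.

Hypothesis sib_lt_total : forall a b, siblings a b -> a != b -> sib_lt a b || sib_lt b a.
Hypothesis sib_lt_asym : forall a b, sib_lt a b -> ~~ sib_lt b a.

Lemma postorder_siblings d (T : orderType d) (f : V -> T) a b :
  postorder_wrt f -> siblings a b -> a != b -> (f a < f b)%O = sib_lt a b.
Proof.
move=> [_ sib] sab nab; have sba : siblings b a by rewrite siblings_sym.
case/orP: (sib_lt_total sab nab) => [lab | lba].
  by rewrite lab (sib _ _ _ _ sab lab (subtree_refl a) (subtree_refl b)).
by rewrite (negbTE (sib_lt_asym lba)) lt_gtF // (sib _ _ _ _ sba lba) ?subtree_refl.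
Qed.

Lemma postorder_lt d1 d2 (T1 : orderType d1) (T2 : orderType d2)
    (f : V -> T1) (g : V -> T2) u v :
  postorder_wrt f -> postorder_wrt g -> (f u < f v)%O -> (g u < g v)%O.
Proof.
move=> [fdesc fsib] [gdesc gsib] fuv.
have nuv : u != v by apply: contraTneq fuv => ->; rewrite ltxx.
case: (subtree_cases u v) => [uv | vu | [a [b [sab nab ua vb]]]].
- exact: gdesc.
- by rewrite eq_sym in nuv; rewrite lt_gtF ?fdesc in fuv.
- case/orP: (sib_lt_total sab nab) => [lab | lba]; first exact: gsib lab ua vb.
  by rewrite siblings_sym in sab; rewrite lt_gtF ?(fsib b a) in fuv.
Qed.

Lemma postorder_ltE d1 d2 (T1 : orderType d1) (T2 : orderType d2)
    (f : V -> T1) (g : V -> T2) u v :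
  postorder_wrt f -> postorder_wrt g -> (f u < f v)%O = (g u < g v)%O.
Proof. by move=> pf pg; apply/idP/idP; apply: postorder_lt. Qed.

Lemma postorder_inj d (T : orderType d) (f : V -> T) : postorder_wrt f -> injective f.
Proof.
move=> [desc sib] u v fuv; apply/eqP; apply: contraT => nuv.
suff : (f u < f v)%O || (f v < f u)%O by rewrite fuv ltxx.
case: (subtree_cases u v) => [uv | vu | [a [b [sab nab ua vb]]]].
- by rewrite desc.
- by rewrite (desc v u) ?orbT // eq_sym.
- case/orP: (sib_lt_total sab nab) => [lab | lba]; first by rewrite (sib a b).
  by rewrite (sib b a v u) ?orbT // siblings_sym.
Qed.

End Postorder.

(* Descendants (longer codes) and children with larger keys come first in the
   dual lexicographic order, which makes it a post-order. *)
Definition lexi_code (key : V -> nat) (v : V) : (seqlexi nat)^d := map key (root_path v).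

Lemma lexi_code_postorder key :
  postorder_wrt [rel a b | key b < key a] (lexi_code key).
Proof.
split=> [x u xu nxu | a b x y /and3P [/eqP pab npa npb] /= lab xa yb].
  have [[|c q] ex] := root_path_subtree xu.
    by move: nxu; rewrite cats0 in ex; rewrite (root_path_inj ex) eqxx.
  by rewrite ltEdual /lexi_code ex map_cat ltxi_prefix.
have [q ex] := root_path_subtree xa; have [q' ey] := root_path_subtree yb.
rewrite ltEdual /lexi_code ex ey (root_path_child npa) (root_path_child npb) pab.
by rewrite !cat_rcons !map_cat ltxi_catl /= neqhead_ltxiE // ltn_eqF.
Qed.

End RootedTree.

Section Rank.
Variables (n : nat) (d : Order.disp_t) (T : orderType d) (f : 'I_n -> T).

Definition rank (v : 'I_n) : nat := #|[set u | (f u < f v)%O]|.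

Lemma rank_ltE u v : (rank u < rank v) = (f u < f v)%O.
Proof.
apply/idP/idP => [|fuv].
  apply: contraLR; rewrite -leNgt -leqNgt => fvu.
  by apply/subset_leq_card/subsetP => w; rewrite !inE => /lt_le_trans; apply.
apply/proper_card/properP; split; last by exists u; rewrite !inE ?ltxx.
by apply/subsetP => w; rewrite !inE => /lt_trans; apply.
Qed.

Lemma rank_lt_n v : rank v < n.
Proof.
have /proper_card : [set u | (f u < f v)%O] \proper [set: 'I_n].
  by rewrite properT; apply/negP => /eqP e; have := in_setT v; rewrite -e inE ltxx.
by rewrite cardsT card_ord.
Qed.

Definition rank_ord (v : 'I_n) : 'I_n := Ordinal (rank_lt_n v).

Lemma rank_ord_inj : injective f -> injective rank_ord.
Proof.
move=> inj_f u v /(congr1 val) /= ruv; apply: inj_f; apply/eqP.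
by rewrite eq_le !leNgt -!rank_ltE ruv ltnn.
Qed.

End Rank.

Lemma card_lt_ord n (v : 'I_n) : #|[set u : 'I_n | u < v]| = v.
Proof.
have le_vn : v <= n by exact: ltnW.
have -> : [set u : 'I_n | u < v] = [set widen_ord le_vn i | i in 'I_v].
  apply/setP => x; rewrite inE; apply/idP/imsetP => [xv | [i _ ->]]; last exact: (ltn_ord i).
  by exists (Ordinal xv) => //; apply: val_inj.
by rewrite card_imset ?card_ord // => i j /(congr1 val) /= /val_inj.
Qed.

Lemma perm_ord_mono_id n (t : {perm 'I_n}) : {mono t : u v / u < v} -> t = 1%g.
Proof.
move=> mono_t; apply/permP => v; rewrite perm1; apply: val_inj => /=.
rewrite -(card_lt_ord v) -(card_lt_ord (t v)) -(card_preimset _ (@perm_inj _ t)).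
by apply: eq_card => u; rewrite !inE mono_t.
Qed.

Section Relabel.
Variable n : nat.
Notation V := 'I_n.
Implicit Types (s t : {perm V}) (par p : {ffun V -> V}) (occ : {set V}).

Definition relabel_tree s par : {ffun V -> V} := [ffun v => s (par ((s^-1)%g v))].
Definition relabel_pref s p : {ffun V -> V} := [ffun i => s (p i)].
Definition relabel s (tp : {ffun V -> V} * {ffun V -> V}) :=
  (relabel_tree s tp.1, relabel_pref s tp.2).

Lemma relabel_treeE s par v : relabel_tree s par (s v) = s (par v).
Proof. by rewrite ffunE permK. Qed.

Lemma iter_relabel s par k v : iter k (relabel_tree s par) (s v) = s (iter k par v).
Proof. by elim: k => //= k ->; rewrite relabel_treeE. Qed.

Lemma is_rtree_relabel s par : is_rtree par -> is_rtree (relabel_tree s par).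
Proof.
case/existsP=> r /forallP rootr; apply/existsP; exists (s r); apply/forallP => v.
by rewrite -(permKV s v) iter_relabel (eqP (rootr _)).
Qed.

Lemma subtree_relabel s par v :
  subtree (relabel_tree s par) (s v) = s @: subtree par v.
Proof.
apply/setP => x; rewrite -(permKV s x) mem_imset; last exact: perm_inj.
by rewrite !inE; apply: eq_existsb => k; rewrite iter_relabel (inj_eq perm_inj).
Qed.

Lemma siblings_relabel s par a b :
  siblings (relabel_tree s par) (s a) (s b) = siblings par a b.
Proof. by rewrite /siblings !relabel_treeE !(inj_eq perm_inj). Qed.

Lemma park_at_relabel s par occ f v :
  park_at (relabel_tree s par) (s @: occ) f (s v) = omap s (park_at par occ f v).
Proof.
elim: f v => //= f IH v; rewrite mem_imset; last exact: perm_inj.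
rewrite relabel_treeE (inj_eq perm_inj).
by case: (v \in occ) => //=; case: (par v == v).
Qed.

Lemma crossed_relabel s par occ f v :
  crossed (relabel_tree s par) (s @: occ) f (s v) = map s (crossed par occ f v).
Proof.
elim: f v => //= f IH v; rewrite mem_imset; last exact: perm_inj.
rewrite relabel_treeE (inj_eq perm_inj) IH.
by case: (v \in occ) => //=; case: (par v == v).
Qed.

Lemma park_step_relabel s par occ a :
  park_step (relabel_tree s par) (s @: occ) (s a) = s @: park_step par occ a.
Proof.
rewrite /park_step park_at_relabel; case: (park_at _ _ _ _) => //= v.
by rewrite imsetU1.
Qed.

Lemma occ_before_relabel s par p i :
  occ_before (relabel_tree s par) (relabel_pref s p) i = s @: occ_before par p i.
Proof.
rewrite /occ_before -[set0 in LHS](imset0 s); set l := filter _ _.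
by elim: l (set0 : {set V}) => //= j l IH occ; rewrite ffunE park_step_relabel IH.
Qed.

Lemma is_parking_relabel s par p :
  is_parking par p -> is_parking (relabel_tree s par) (relabel_pref s p).
Proof.
move/forallP=> parks; apply/forallP => i.
by rewrite occ_before_relabel ffunE park_at_relabel; case: (park_at _ _ _ _) (parks i).
Qed.

Lemma is_prime_relabel s par p :
  is_prime par p -> is_prime (relabel_tree s par) (relabel_pref s p).
Proof.
move/forallP=> prime_p; apply/forallP => v; rewrite -(permKV s v).
have := prime_p ((s^-1)%g v); set w := (s^-1)%g v.
rewrite relabel_treeE (inj_eq perm_inj) subtree_relabel card_imset; last exact: perm_inj.
congr (_ ==> (_ < _)); apply: eq_card => i.
by rewrite !inE ffunE mem_imset ?inE //; exact: perm_inj.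
Qed.

Lemma first_cross_relabel s par p u :
  first_cross (relabel_tree s par) (relabel_pref s p) (s u) = first_cross par p u.
Proof.
apply: eq_find => i /=.
by rewrite occ_before_relabel ffunE crossed_relabel mem_map //; exact: perm_inj.
Qed.

Lemma relabelM s t tp : relabel s (relabel t tp) = relabel (t * s)%g tp.
Proof. by congr (_, _); apply/ffunP => v; rewrite !ffunE ?invMg !permM. Qed.

Lemma relabel1 tp : relabel 1%g tp = tp.
Proof. by case: tp => par p; congr (_, _); apply/ffunP => v; rewrite !ffunE ?invg1 !perm1. Qed.

Lemma postorder_relabel s par (sib_lt sib_lt' : rel V) d (T : orderType d) (f : V -> T) :
  (forall a b, sib_lt' (s a) (s b) = sib_lt a b) ->
  postorder_wrt (relabel_tree s par) sib_lt' f <-> postorder_wrt par sib_lt (f \o s).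
Proof.
move=> sib_ltE.
have mem_sub x u : (s x \in subtree (relabel_tree s par) (s u)) = (x \in subtree par u).
  by rewrite subtree_relabel mem_imset //; exact: perm_inj.
have sE x' : exists x, x' = s x by exists ((s^-1)%g x'); rewrite permKV.
split=> [[desc sib] | [desc sib]]; split.
- by move=> x u xu nxu; apply: desc; rewrite ?mem_sub ?(inj_eq perm_inj).
- move=> a b x y sab lab xa yb.
  by apply: (sib (s a) (s b)); rewrite ?siblings_relabel ?sib_ltE ?mem_sub.
- move=> x' u'; have [x ->] := sE x'; have [u ->] := sE u'.
  rewrite mem_sub (inj_eq perm_inj); exact: desc.
- move=> a' b' x' y'; have [a ->] := sE a'; have [b ->] := sE b'.
  have [x ->] := sE x'; have [y ->] := sE y'.
  rewrite siblings_relabel sib_ltE !mem_sub; exact: sib.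
Qed.

End Relabel.

Lemma filter_lt_enum_ord n k : k <= n ->
  [seq j : 'I_n <- enum 'I_n | j < k] = take k (enum 'I_n).
Proof.
move=> le_kn; apply: (inj_map val_inj).
rewrite map_take val_enum_ord take_iota (minn_idPl le_kn) -(filter_iota_ltn 0 le_kn).
by rewrite -val_enum_ord; elim: (enum 'I_n) => //= j s IH; case: ifP => /= _; rewrite IH.
Qed.

Section Crossing.
Variable n : nat.
Notation V := 'I_n.
Variable par : {ffun V -> V}.
Hypothesis tree : is_rtree par.
Implicit Types (occ : {set V}).

Lemma crossed_iter occ f (v x : V) : x \in crossed par occ f v ->
  exists j, x = iter j par v /\ par x != x.
Proof.
elim: f v => //= f IH v; case: (v \in occ) => //=; have [// | npv] := eqVneq (par v) v.
rewrite inE => /orP [/eqP -> | /IH [j [-> nx]]]; first by exists 0.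
by exists j.+1; rewrite iterSr.
Qed.

Lemma crossed_siblings occ f (v a b : V) : a \in crossed par occ f v ->
  b \in crossed par occ f v -> par a = par b -> a = b.
Proof.
move=> /crossed_iter [i [-> na]] /crossed_iter [j [-> nb]].
wlog le_ij : i j na nb / i <= j.
  move=> W e; have [le_ij | /ltnW le_ji] := leqP i j; first exact: W.
  by apply/esym/W.
move: nb; rewrite -(subnK le_ij) iterD; set x := iter i par v.
case: (j - i) => [// | m] nb e.
have : iter m.+1 par (par x) = par x by rewrite -iterSr iterS -e.
move/(periodic_fixed tree) => ppa.
by move: nb; rewrite iterSr iter_fixed // ppa eqxx.
Qed.

Lemma park_at_notin occ f (v x : V) : park_at par occ f v = Some x -> x \notin occ.
Proof.
elim: f v => //= f IH v.
by case: ifP => [vocc [<-] // | _]; case: ifP => // _; apply: IH.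
Qed.

Lemma park_at_subtree occ f (v x a : V) : park_at par occ f v = Some x ->
  v \in subtree par a -> a \notin crossed par occ f v -> x \in subtree par a.
Proof.
elim: f v => //= f IH v; case: ifP => [_ [<-] // | _]; case: ifP => // _ parks va.
rewrite inE negb_or eq_sym => /andP [nav na]; apply: IH parks _ na.
exact: par_in_subtree.
Qed.

Variable p : {ffun V -> V}.
Hypothesis parking : is_parking par p.
Hypothesis prime : is_prime par p.

Definition occupied k : {set V} := foldl (park_step par) set0 (map p (take k (enum V))).

Lemma occ_before_occupied (i : V) : occ_before par p i = occupied i.
Proof. by rewrite /occ_before filter_lt_enum_ord // ltnW. Qed.

Lemma occupied_mono k j : k <= j -> occupied k \subset occupied j.
Proof.
move=> le_kj; rewrite /occupied -(cat_take_drop k (take j (enum V))) (take_takel _ le_kj).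
rewrite map_cat foldl_cat; elim: (map p _) (foldl _ _ _) => //= a l IH occ.
apply: subset_trans (IH _); rewrite /park_step; case: (park_at _ _ _ _) => // v.
exact: subsetUr.
Qed.

Definition spot (i : V) : V := odflt i (park_at par (occ_before par p i) n (p i)).

Lemma spotE (i : V) : park_at par (occ_before par p i) n (p i) = Some (spot i).
Proof. by move/forallP: parking => /(_ i); rewrite /spot; case: (park_at _ _ _ _). Qed.

Lemma spot_occupied (i : V) : spot i \in occupied i.+1.
Proof.
rewrite /occupied (take_nth i) ?size_enum_ord // map_rcons foldl_rcons nth_ord_enum.
by rewrite -/(occupied i) -occ_before_occupied /park_step spotE setU11.
Qed.

Lemma spot_inj : injective spot.
Proof.
suff spot_lt (i j : V) : i < j -> spot i != spot j.
  move=> i j; apply: contra_eq; rewrite neq_ltn => /orP [/spot_lt | /spot_lt] //.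
  by rewrite eq_sym.
move=> lt_ij; apply: contraTneq (park_at_notin (spotE j)) => <-.
by rewrite negbK occ_before_occupied (subsetP (occupied_mono lt_ij)) ?spot_occupied.
Qed.

(* Were the edge above [a] never crossed, [spot] would inject the drivers
   preferring [subtree par a] into [subtree par a], contradicting primality. *)
Lemma first_cross_lt_n (a : V) : par a != a -> first_cross par p a < n.
Proof.
move=> npa; rewrite -[X in _ < X]size_enum_ord -has_find; apply/negPn/negP.
move/hasPn => never; move/forallP: prime => /(_ a); rewrite npa /=; apply/negP.
rewrite -leqNgt -(card_imset _ spot_inj); apply/subset_leq_card/subsetP => x.
case/imsetP=> i; rewrite inE => pia ->.
exact: park_at_subtree (spotE i) pia (never i (mem_enum _ i)).
Qed.

Lemma first_cross_siblings (a b : V) : siblings par a b ->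
  first_cross par p a = first_cross par p b -> a = b.
Proof.
case/and3P=> /eqP pab npa npb fab.
pose crossing c (i : V) := c \in crossed par (occ_before par p i) n (p i).
have crossed_first c : par c != c -> crossing c (nth a (enum V) (first_cross par p c)).
  by move=> nc; apply: nth_find; rewrite has_find size_enum_ord first_cross_lt_n.
by apply: crossed_siblings pab; [exact: crossed_first | rewrite fab; exact: crossed_first].
Qed.

End Crossing.

Section Standardization.
Variable n : nat.
Notation V := 'I_n.

Definition left_of (par p : {ffun V -> V}) : rel V :=
  fun u v => first_cross par p v < first_cross par p u.

Lemma left_of_asym par p u v : left_of par p u v -> ~~ left_of par p v u.
Proof. by rewrite /left_of -leqNgt => /ltnW. Qed.

Lemma left_of_relabel s par p u v :
  left_of (relabel_tree s par) (relabel_pref s p) (s u) (s v) = left_of par p u v.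
Proof. by rewrite /left_of !first_cross_relabel. Qed.

Section PrimeParking.
Variables par p : {ffun V -> V}.
Hypotheses (tree : is_rtree par) (parking : is_parking par p) (prime : is_prime par p).

Lemma left_of_total u v : siblings par u v -> u != v -> left_of par p u v || left_of par p v u.
Proof.
move=> suv nuv; rewrite /left_of orbC -neq_ltn.
by apply: contra nuv => /eqP /(first_cross_siblings tree parking prime suv) ->.
Qed.

Definition crossing_code : V -> (seqlexi nat)^d := lexi_code par (first_cross par p).

Lemma crossing_code_postorder : postorder_wrt par (left_of par p) crossing_code.
Proof. exact: lexi_code_postorder. Qed.

Lemma postorder_restrictedP :
  is_postorder par && is_restricted par p <->
  postorder_wrt par (left_of par p) (@nat_of_ord n).
Proof.
split=> [/andP [/andP [/forallP desc /forallP sib] /forallP restr] | po].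
  have sib_lt a b : siblings par a b -> a != b -> (a < b) = left_of par p a b.
    move=> sab nab; have /implyP := forallP (restr a) b.
    by rewrite nab => /(_ sab) /eqP.
  split=> [x u xu nxu | a b x y sab lab xa yb]; rewrite ltEnat /=.
    by rewrite ltn_neqAle (inj_eq val_inj) nxu (implyP (forallP (desc u) x)).
  have nab : a != b by apply: contraTneq lab => ->; rewrite /left_of ltnn.
  move/forallP: (sib a) => /(_ b) /implyP; rewrite sib_lt // lab => /(_ sab).
  by move=> /forallP /(_ x) /forallP /(_ y) /implyP; apply; rewrite xa yb.
have sib_lt a b : siblings par a b -> a != b -> (a < b) = left_of par p a b.
  move=> sab nab.
  by rewrite -(postorder_siblings tree left_of_total (@left_of_asym par p) po sab nab) ltEnat.
apply/andP; split; [apply/andP; split|]; apply/forallP => u; apply/forallP => v.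
- apply/implyP => vu; have [-> // | nvu] := eqVneq v u.
  exact/ltnW/po.1.
- apply/implyP => /andP [uv suv]; apply/forallP => x; apply/forallP => y.
  apply/implyP => /andP [xu yv]; have nuv : u != v by rewrite neq_ltn uv.
  by move: (po.2 u v x y suv); rewrite -sib_lt // uv ltEnat /=; apply.
- by apply/implyP => /andP [nuv suv]; rewrite sib_lt.
Qed.

End PrimeParking.

Definition prime_pairs : {set {ffun V -> V} * {ffun V -> V}} :=
  [set tp | [&& is_rtree tp.1, is_parking tp.1 tp.2 & is_prime tp.1 tp.2]].

Lemma relabel_prime_pairs s tp : tp \in prime_pairs -> relabel s tp \in prime_pairs.
Proof.
case: tp => par p; rewrite !inE /= => /and3P [tree parking prime].
by rewrite is_rtree_relabel ?is_parking_relabel ?is_prime_relabel.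
Qed.

Lemma SRP_sub_prime_pairs : SRP n \subset prime_pairs.
Proof. by apply/subsetP => -[par p]; rewrite !inE => /and5P [-> _ -> -> _]. Qed.

Lemma SRP_postorder par p : (par, p) \in prime_pairs ->
  (par, p) \in SRP n <-> postorder_wrt par (left_of par p) (@nat_of_ord n).
Proof.
move=> PPx; have := PPx; rewrite inE => /and3P [tree parking prime].
by rewrite inE /= tree parking prime; exact: postorder_restrictedP.
Qed.

Lemma relabel_SRP_rigid t tp : tp \in SRP n -> relabel t tp \in SRP n -> t = 1%g.
Proof.
case: tp => par p SRPx SRPtx; have PPx := subsetP SRP_sub_prime_pairs _ SRPx.
have := PPx; rewrite inE => /and3P [tree parking prime].
have po := (SRP_postorder PPx).1 SRPx.
have po_t : postorder_wrt par (left_of par p) (@nat_of_ord n \o t).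
  apply/(postorder_relabel par _ (left_of_relabel t par p)).
  exact: (SRP_postorder (relabel_prime_pairs t PPx)).1 SRPtx.
apply: perm_ord_mono_id => u v.
by have := postorder_ltE tree (left_of_total tree parking prime) u v po_t po; rewrite ltEnat.
Qed.

Lemma relabel_to_SRP tp : tp \in prime_pairs -> exists s, relabel s tp \in SRP n.
Proof.
case: tp => par p PPx; have := PPx; rewrite inE => /and3P [tree parking prime].
have code_po := crossing_code_postorder p tree.
have code_inj := postorder_inj tree (left_of_total tree parking prime) code_po.
pose s := perm (rank_ord_inj code_inj).
exists s; apply/(SRP_postorder (relabel_prime_pairs s PPx)).
apply/(postorder_relabel par _ (left_of_relabel s par p)).
apply: (postorder_wrt_mono _ code_po) => u v.
by rewrite /= !permE /= ltEnat /= rank_ltE.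
Qed.

Lemma relabel_SRP_inj :
  {in setX [set: {perm V}] (SRP n) &, injective (fun x => relabel x.1 x.2)}.
Proof.
move=> [s1 x1] [s2 x2] /setXP [_ SRP1] /setXP [_ SRP2] /= e.
have e12 : relabel (s1 * s2^-1)%g x1 = x2 by rewrite -relabelM e relabelM mulgV relabel1.
have t1 : (s1 * s2^-1)%g = 1%g by apply: (relabel_SRP_rigid SRP1); rewrite e12.
by move: e12; rewrite t1 relabel1 => ->; rewrite -(mulgKV s2 s1) t1 mul1g.
Qed.

Lemma prime_pairsE :
  prime_pairs = [set relabel x.1 x.2 | x in setX [set: {perm V}] (SRP n)].
Proof.
apply/setP => tp; apply/idP/imsetP => [PPtp | [[s x] /setXP [_ SRPx] ->]].
  have [s SRPs] := relabel_to_SRP PPtp.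
  exists ((s^-1)%g, relabel s tp); first exact/setXP.
  by rewrite relabelM mulgV relabel1.
exact/relabel_prime_pairs/(subsetP SRP_sub_prime_pairs).
Qed.

End Standardization.

Theorem proposition4p2 (n : nat) : 0 < n ->
  P_count n = n`! * #|SRP n|.
Proof.
move=> _; rewrite (_ : P_count n = #|prime_pairs n|) // prime_pairsE.
by rewrite (card_in_imset (@relabel_SRP_inj n)) cardsX cardsT card_Sn.
Qed.
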